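(* For every $\varphi\in\mathcal{L}_{APAL_{int}}$ and every maximally consistent theory $x$ of $APAL_{int}$: $\Box\varphi\in x$ iff $[\psi]\varphi\in x$ for all $\psi\in\mathcal{L}_{PAL_{int}}$.
   Context: $\mathcal{L}_{APAL_{int}}$: $\varphi ::= p \mid \neg\varphi \mid \varphi\wedge\varphi \mid K_i\varphi \mid \mathrm{int}(\varphi)\mid [\varphi]\varphi\mid\Box\varphi$ over a countable $\mathit{Prop}$ and finite non-empty agent set $\mathcal{A}$; $\mathcal{L}_{PAL_{int}}$ its $\Box$-free fragment; $\bot:=p\wedge\neg p$. Necessity forms: $\xi(\sharp)::=\sharp\mid\varphi\to\xi(\sharp)\mid K_i\xi(\sharp)\mid\mathrm{int}(\xi(\sharp))\mid[\varphi]\xi(\sharp)$. $APAL_{int}$: axioms: propositional tautologies; $K_i(\varphi\to\psi)\to(K_i\varphi\to K_i\psi)$; $K_i\varphi\to\varphi$; $K_i\varphi\to K_iK_i\varphi$; $\neg K_i\varphi\to K_i\neg K_i\varphi$; $\mathrm{int}(\varphi\to\psi)\to(\mathrm{int}(\varphi)\to\mathrm{int}(\psi))$; $\mathrm{int}(\varphi)\to\varphi$; $\mathrm{int}(\varphi)\to\mathrm{int}(\mathrm{int}(\varphi))$; $K_i\varphi\to\mathrm{int}(\varphi)$; $[\varphi]p\leftrightarrow(\mathrm{int}(\varphi)\to p)$; $[\varphi]\neg\psi\leftrightarrow(\mathrm{int}(\varphi)\to\neg[\varphi]\psi)$; $[\varphi](\psi\wedge\chi)\leftrightarrow[\varphi]\psi\wedge[\varphi]\chi$;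 $[\varphi]\mathrm{int}(\psi)\leftrightarrow(\mathrm{int}(\varphi)\to\mathrm{int}([\varphi]\psi))$; $[\varphi]K_i\psi\leftrightarrow(\mathrm{int}(\varphi)\to K_i[\varphi]\psi)$; $[\varphi][\psi]\chi\leftrightarrow[\neg[\varphi]\neg\mathrm{int}(\psi)]\chi$; (R7) $\Box\varphi\to[\chi]\varphi$ ($\chi\in\mathcal{L}_{PAL_{int}}$). Rules: modus ponens; from $\varphi$ infer $K_i\varphi$; from $\varphi$ infer $\mathrm{int}(\varphi)$; from $\varphi$ infer $[\psi]\varphi$; (DR5) from $\xi([\psi]\chi)$ for all $\psi\in\mathcal{L}_{PAL_{int}}$ infer $\xi(\Box\chi)$. A theory is a set of formulas containing all theorems of $APAL_{int}$ and closed under modus ponens and (DR5); it is consistent iff $\bot\notin$ it; a set of formulas is consistent iff contained in a consistent theory; a theory is maximally consistent iff it is consistent and every set properly containing it is inconsistent. *)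

From Stdlib Require Import List.
Set Implicit Arguments.

Section Syntax.
Variable Ag : Type.

Inductive form : Type :=
| Var : nat -> form
| Neg : form -> form
| And : form -> form -> form
| K : Ag -> form -> form
| Int : form -> form
| Ann : form -> form -> form   (* [phi] psi *)
| Box : form -> form.

(* L_PAL_int: the Box-free fragment *)
Fixpoint box_free (f : form) : Prop :=
  match f with
  | Var _ => True
  | Neg a => box_free a
  | And a b => box_free a /\ box_free b
  | K _ a => box_free a
  | Int a => box_free a
  | Ann a b => box_free a /\ box_free b
  | Box _ => False
  end.

Definition Bot : form := And (Var 0) (Neg (Var 0)).
Definition Imp (a b : form) : form := Neg (And a (Neg b)).
Definition Iff (a b : form) : form := And (Imp a b) (Imp b a).

(* Propositional tautology (instance): true under every Boolean valuation that
   treats all non-(Neg/And)-headed subformulas as atoms. *)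
Fixpoint peval (v : form -> bool) (f : form) : bool :=
  match f with
  | Neg a => negb (peval v a)
  | And a b => andb (peval v a) (peval v b)
  | _ => v f
  end.
Definition taut (f : form) : Prop := forall v, peval v f = true.

Inductive nform : Type :=
| NHole : nform
| NImp : form -> nform -> nform
| NK : Ag -> nform -> nform
| NInt : nform -> nform
| NAnn : form -> nform -> nform.

Fixpoint nfill (x : nform) (s : form) : form :=
  match x with
  | NHole => s
  | NImp a x' => Imp a (nfill x' s)
  | NK i x' => K i (nfill x' s)
  | NInt x' => Int (nfill x' s)
  | NAnn a x' => Ann a (nfill x' s)
  end.

Inductive thm : form -> Prop :=
| Ax_taut : forall f, taut f -> thm f
| Ax_K : forall i a b, thm (Imp (K i (Imp a b)) (Imp (K i a) (K i b)))
| Ax_T : forall i a, thm (Imp (K i a) a)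
| Ax_4 : forall i a, thm (Imp (K i a) (K i (K i a)))
| Ax_5 : forall i a, thm (Imp (Neg (K i a)) (K i (Neg (K i a))))
| Ax_intK : forall a b, thm (Imp (Int (Imp a b)) (Imp (Int a) (Int b)))
| Ax_intT : forall a, thm (Imp (Int a) a)
| Ax_int4 : forall a, thm (Imp (Int a) (Int (Int a)))
| Ax_Kint : forall i a, thm (Imp (K i a) (Int a))
| Ax_R1 : forall a p, thm (Iff (Ann a (Var p)) (Imp (Int a) (Var p)))
| Ax_R2 : forall a b, thm (Iff (Ann a (Neg b)) (Imp (Int a) (Neg (Ann a b))))
| Ax_R3 : forall a b c, thm (Iff (Ann a (And b c)) (And (Ann a b) (Ann a c)))
| Ax_R4 : forall a b, thm (Iff (Ann a (Int b)) (Imp (Int a) (Int (Ann a b))))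
| Ax_R5 : forall i a b, thm (Iff (Ann a (K i b)) (Imp (Int a) (K i (Ann a b))))
| Ax_R6 : forall a b c,
    thm (Iff (Ann a (Ann b c)) (Ann (Neg (Ann a (Neg (Int b)))) c))
| Ax_R7 : forall a c, box_free c -> thm (Imp (Box a) (Ann c a))
| R_MP : forall a b, thm (Imp a b) -> thm a -> thm b
| R_NecK : forall i a, thm a -> thm (K i a)
| R_NecInt : forall a, thm a -> thm (Int a)
| R_NecAnn : forall a b, thm a -> thm (Ann b a)
| R_DR5 : forall x c,
    (forall p, box_free p -> thm (nfill x (Ann p c))) -> thm (nfill x (Box c)).

Definition theory (T : form -> Prop) : Prop :=
  (forall f, thm f -> T f) /\
  (forall a b, T (Imp a b) -> T a -> T b) /\
  (forall x c, (forall p, box_free p -> T (nfill x (Ann p c))) -> T (nfill x (Box c))).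

Definition consistent_theory (T : form -> Prop) : Prop := theory T /\ ~ T Bot.

Definition consistent_set (S : form -> Prop) : Prop :=
  exists T, consistent_theory T /\ (forall f, S f -> T f).

Definition max_consistent (T : form -> Prop) : Prop :=
  consistent_theory T /\
  forall S : form -> Prop,
    (forall f, T f -> S f) -> (exists f, S f /\ ~ T f) -> ~ consistent_set S.

End Syntax.

(* Only the closure conditions of a theory are needed: axiom (R7) with modus
   ponens gives one direction, and the rule (DR5) instantiated at the trivial
   necessity form gives the other. *)
From Stdlib Require Import List.

Section TheoryBox.
Context {Ag : Type} {T : form Ag -> Prop}.
Hypothesis T_theory : theory T.

Lemma theory_Ann_of_Box {phi psi : form Ag} :
  box_free psi -> T (Box phi) -> T (Ann psi phi).
Proof.
  destruct T_theory as [T_thm [T_mp _]].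
  intros Hpsi Hbox.
  apply (T_mp (Box phi)); [apply T_thm, Ax_R7, Hpsi | exact Hbox].
Qed.

Lemma theory_Box_of_Ann (phi : form Ag) :
  (forall psi, box_free psi -> T (Ann psi phi)) -> T (Box phi).
Proof.
  destruct T_theory as [_ [_ T_dr5]].
  exact (T_dr5 (NHole Ag) phi).
Qed.

Lemma theory_BoxE (phi : form Ag) :
  T (Box phi) <-> forall psi, box_free psi -> T (Ann psi phi).
Proof.
  split.
  - intros Hbox psi Hpsi; exact (theory_Ann_of_Box Hpsi Hbox).
  - exact (theory_Box_of_Ann phi).
Qed.

End TheoryBox.

Lemma max_consistent_theory {Ag : Type} {x : form Ag -> Prop} :
  max_consistent x -> theory x.
Proof. intros [[Hx _] _]; exact Hx. Qed.

Theorem mainTheorem20 (Ag : Type)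
  (Hfin : exists l : list Ag, forall i : Ag, In i l) (Hne : inhabited Ag)
  (phi : form Ag) (x : form Ag -> Prop) :
  max_consistent x ->
  (x (Box phi) <-> forall psi : form Ag, box_free psi -> x (Ann psi phi)).
Proof.
  intros Hx.
  exact (theory_BoxE (max_consistent_theory Hx) phi).
Qed.
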